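(* Let $T$ be a set of $n$ transactions with a nonempty symmetric irreflexive conflict relation $\bowtie$. Let $M=\min_\pi p(\pi)$ over all total orders $\pi$ of $T$, and let $ch$ be the maximum number $m$ such that there exist distinct transactions $tx_1,\dots,tx_m$ with $tx_1\bowtie tx_2\bowtie\cdots\bowtie tx_m$. Then the set of concurrency levels $\{n/p(\pi):\pi \text{ a total order of } T\}$ has at least $\alpha=\left\lceil \frac{ch-(M-1)}{M-1}\right\rceil$ distinct elements.
   Context: A set of transactions is conflict-free if no two of its elements conflict. For a total order $\pi$ of $T$, a $\pi$-respecting phase sequence is an ordered partition $(P_1,\dots,P_m)$ of $T$ into conflict-free sets (phases) such that whenever $tx\bowtie tx'$ and $tx$ precedes $tx'$ in $\pi$, the phase containing $tx$ has a smaller index than the phase containing $tx'$. $p(\pi)$, the necessary number of phases for execution given $\pi$, is the minimum length $m$ of a $\pi$-respecting phase sequence, and $n/p(\pi)$ is the concurrency level of $\pi$. *)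

From mathcomp Require Import all_boot all_order all_algebra.
Set Implicit Arguments. Unset Strict Implicit. Unset Printing Implicit Defensive.
Import Order.TTheory GRing.Theory Num.Theory.

(* A total order pi of T is represented by its ranking, an injective
   (hence bijective) map r : T -> 'I_n; tx precedes tx' in pi iff r tx < r tx'. *)
Section Phases.
Variables (T : finType) (e : rel T).

Definition total_order (r : {ffun T -> 'I_#|T|}) : bool := injectiveb r.

(* (P_1,...,P_m) given by f : T -> 'I_m (P_{i+1} = f^-1(i)): an ordered
   partition into nonempty conflict-free phases respecting r. *)
Definition respecting_phase_seq (r : {ffun T -> 'I_#|T|}) (m : nat)
    (f : {ffun T -> 'I_m}) : bool :=
  [&& [forall i : 'I_m, exists x, f x == i],
      [forall x, forall y, ((x != y) && (f x == f y)) ==> ~~ e x y] &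
      [forall x, forall y, (e x y && (r x < r y)) ==> (f x < f y)]].

Definition has_phase_seq (r : {ffun T -> 'I_#|T|}) (m : nat) : bool :=
  [exists f : {ffun T -> 'I_m}, respecting_phase_seq r f].

(* p(pi): least m admitting a pi-respecting phase sequence of length m
   (such an m <= n always exists for a total order, e.g. m = n). *)
Definition nphases (r : {ffun T -> 'I_#|T|}) : nat :=
  find (has_phase_seq r) (iota 0 #|T|.+1).

Definition Mmin : nat := \big[minn/#|T|]_(r | total_order r) nphases r.

Definition has_chain (m : nat) : bool :=
  [exists t : m.-tuple T, uniq t && sorted e t].

Definition ch : nat := \max_(m < #|T|.+1 | has_chain m) m.

Definition concurrency_levels : seq rat :=
  undup [seq (#|T|%:Q / (nphases r)%:Q)%R
        | r <- enum [pred r : {ffun T -> 'I_#|T|} | total_order r]].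

Definition alpha : int :=
  Num.ceil ((ch%:Q - (Mmin%:Q - 1)) / (Mmin%:Q - 1))%R.
End Phases.

From mathcomp Require Import all_boot all_order all_algebra.
From mathcomp Require Import zify lra.
Import Order.TTheory GRing.Theory Num.Theory.
Set Implicit Arguments. Unset Strict Implicit. Unset Printing Implicit Defensive.

(* Let r0 be an order with p(r0) = M and tx_1 ⋈ ... ⋈ tx_c a longest chain.
   Moving tx_c, ..., tx_1 to the front of r0 one at a time raises the number
   of phases by at most one per move (the moved transaction can run alone in a
   new first phase), and ends with an order listing the chain first, which
   needs at least c phases.  Hence every L with M <= L <= c is p(pi) for some
   pi, giving c - M + 1 distinct levels n/L, and c - M + 1 >= alpha. *)

Section RankInSet.
Variables (m : nat) (S : {set 'I_m}).

Definition rank_in (i : 'I_m) : nat := #|[set j in S | j < i]|.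

Lemma rank_in_lt (i1 i2 : 'I_m) : i1 \in S -> i1 < i2 -> rank_in i1 < rank_in i2.
Proof.
move=> i1S lt12; apply: proper_card; apply/properP; split.
  apply/subsetP => j; rewrite !inE => /andP[-> /= ji]; exact: ltn_trans ji lt12.
by exists i1; rewrite !inE ?i1S ?lt12 // ltnn andbF.
Qed.

Lemma rank_in_ltS i : i \in S -> rank_in i < #|S|.
Proof.
move=> iS; apply: proper_card; apply/properP; split.
  by apply/subsetP => j; rewrite !inE => /andP[].
by exists i; rewrite // !inE ltnn andbF.
Qed.

Lemma rank_in_ltE : {in S &, forall i1 i2, (rank_in i1 < rank_in i2) = (i1 < i2)}.
Proof.
move=> i1 i2 i1S i2S; apply/idP/idP; last exact: rank_in_lt.
case: (ltngtP i1 i2) => // [/(rank_in_lt i2S) lt21 lt12 | eq12].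
  by have := ltn_trans lt12 lt21; rewrite ltnn.
by rewrite (val_inj eq12) ltnn.
Qed.

Lemma rank_in_inj : {in S &, injective rank_in}.
Proof.
move=> i1 i2 i1S i2S eq12; apply/val_inj; case: (ltngtP i1 i2) => //.
  by rewrite -(rank_in_ltE i1S i2S) eq12 ltnn.
by rewrite -(rank_in_ltE i2S i1S) eq12 ltnn.
Qed.

End RankInSet.

Lemma exists_rank_compression (T : finType) m (f : T -> 'I_m) :
  exists g : {ffun T -> 'I_#|f @: T|},
    (forall j, exists x, g x = j) /\ (forall x y, (g x < g y) = (f x < f y)).
Proof.
set S := f @: T.
have fS x : f x \in S by apply: imset_f.
pose g := [ffun x => Ordinal (rank_in_ltS (fS x))].
have gE x : val (g x) = rank_in S (f x) by rewrite ffunE.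
exists g; split; last by move=> x y; rewrite !gE rank_in_ltE.
have ranks_uniq : uniq [seq rank_in S i | i <- enum S].
  rewrite map_inj_in_uniq ?enum_uniq // => i1 i2.
  by rewrite !mem_enum; apply: rank_in_inj.
have ranks_sub : {subset [seq rank_in S i | i <- enum S] <= iota 0 #|S|}.
  by move=> k /mapP[i]; rewrite mem_enum mem_iota => iS ->; rewrite rank_in_ltS.
have [|_ ranksE] := uniq_min_size ranks_uniq ranks_sub.
  by rewrite size_iota size_map cardE.
move=> j; have /mapP[_ /[!mem_enum] /imsetP[x _ ->] jE] :
    val j \in [seq rank_in S i | i <- enum S] by rewrite ranksE mem_iota /=.
by exists x; apply: val_inj; rewrite gE.
Qed.

Section NumberOfPhases.
Variables (T : finType) (e : rel T).
Local Notation n := #|T|.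
Implicit Types (r : {ffun T -> 'I_n}) (x y v : T).

(* A phase sequence in which phases may be empty. *)
Definition phase_assignment r m (f : T -> 'I_m) : Prop :=
  (forall x y, x != y -> f x = f y -> ~~ e x y) /\
  (forall x y, e x y -> r x < r y -> f x < f y).

Lemma respecting_phase_seqP r m (f : {ffun T -> 'I_m}) :
  reflect ((forall i, exists x, f x = i) /\ phase_assignment r f)
          (respecting_phase_seq e r f).
Proof.
apply: (iffP and3P) => [[/forallP onto /forallP cfree /forallP resp]|[onto [cfree resp]]].
  split; first by move=> i; have /existsP[x /eqP] := onto i; exists x.
  split=> x y.
    by move=> xy fxy; have /forallP/(_ y) := cfree x; rewrite xy fxy eqxx.
  by move=> exy rxy; have /forallP/(_ y)/implyP := resp x; apply; rewrite exy.
split; apply/forallP => x.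
- by have [y <-] := onto x; apply/existsP; exists y.
- apply/forallP => y; apply/implyP => /andP[xy /eqP]; exact: cfree.
- apply/forallP => y; apply/implyP => /andP[]; exact: resp.
Qed.

Lemma has_phase_seq_compress r m (f : T -> 'I_m) : phase_assignment r f ->
  exists2 k, (k <= m) && (k <= n) & has_phase_seq e r k.
Proof.
move=> [cfree resp]; have [g [onto gE]] := exists_rank_compression f.
exists #|f @: T|.
  by rewrite leq_imset_card andbT (leq_trans (max_card _)) ?card_ord.
have g_eq x y : g x = g y -> f x = f y.
  by move=> gxy; apply: val_inj; case: (ltngtP (f x) (f y)) => //; rewrite -gE gxy ltnn.
apply/existsP; exists g; apply/respecting_phase_seqP; split => //.
split=> x y; first by move=> xy /g_eq; apply: cfree.
by rewrite gE; apply: resp.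
Qed.

Lemma nphases_le r m (f : T -> 'I_m) : phase_assignment r f -> nphases e r <= m.
Proof.
case/has_phase_seq_compress => k /andP[km kn] hk; apply: leq_trans km.
rewrite leqNgt; apply/negP => /(before_find 0).
by rewrite nth_iota ?add0n ?ltnS // hk.
Qed.

Lemma total_order_phase_assignment r : total_order r -> phase_assignment r r.
Proof.
move/injectiveP => r_inj; split=> [x y xy /r_inj xy_eq|//].
by rewrite xy_eq eqxx in xy.
Qed.

Lemma has_phase_seq_nphases r : total_order r -> has_phase_seq e r (nphases e r).
Proof.
move/total_order_phase_assignment/has_phase_seq_compress => [k /andP[_ kn] hk].
have hs : has (has_phase_seq e r) (iota 0 n.+1).
  by apply/hasP; exists k; rewrite // mem_iota add0n ltnS.
by have := nth_find 0 hs; rewrite has_find size_iota in hs; rewrite nth_iota.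
Qed.

Lemma chain_size_le_nphases r (l : seq T) : total_order r ->
  sorted e l -> sorted (fun x y => r x < r y) l -> size l <= nphases e r.
Proof.
move=> /has_phase_seq_nphases /existsP[f /respecting_phase_seqP[_ [_ resp]]] le lr.
have lf : sorted (fun i j : 'I_(nphases e r) => i < j) (map f l).
  rewrite sorted_map; have := lr; rewrite -(andTb (sorted _ l)) -le -sorted_relI.
  by apply: sub_sorted => x y /andP[]; apply: resp.
have /card_uniqP : uniq (map f l).
  by apply: sorted_uniq lf; [apply: ltn_trans | apply: ltnn].
by rewrite size_map => <-; rewrite -[X in _ <= X]card_ord max_card.
Qed.

Lemma total_order_neq r x y : total_order r -> x != y -> (r x : nat) != r y.
Proof. by move/injectiveP => r_inj; apply: contraNneq => /val_inj/r_inj->. Qed.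

Definition move_to_front_rank r v x : nat :=
  if x == v then 0 else if r x < r v then (r x).+1 else r x.

Definition move_to_front r v : {ffun T -> 'I_n} :=
  [ffun x => insubd (r x) (move_to_front_rank r v x)].

Lemma move_to_frontE r v x : (move_to_front r v x : nat) = move_to_front_rank r v x.
Proof.
rewrite ffunE val_insubd ifT // /move_to_front_rank.
case: eqP => _; first exact: leq_ltn_trans (leq0n _) (ltn_ord (r x)).
by case: (ltnP (r x) (r v)) => // lt; apply: leq_ltn_trans lt _.
Qed.

Lemma move_to_front_lt r v x y : total_order r -> x != v -> y != v ->
  (move_to_front r v x < move_to_front r v y) = (r x < r y).
Proof.
move=> r_tot xv yv; have := total_order_neq r_tot xv; have := total_order_neq r_tot yv.
rewrite !move_to_frontE /move_to_front_rank (negbTE xv) (negbTE yv).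
by do 2 case: ifP; lia.
Qed.

Lemma move_to_front_first r v y : total_order r -> y != v ->
  move_to_front r v v < move_to_front r v y.
Proof.
move=> r_tot yv; have := total_order_neq r_tot yv.
by rewrite !move_to_frontE /move_to_front_rank eqxx (negbTE yv); case: ifP; lia.
Qed.

Lemma total_order_move_to_front r v : total_order r -> total_order (move_to_front r v).
Proof.
move=> r_tot; apply/injectiveP => x y mxy; apply/eqP; apply: contraT => xy.
have [xv|xv] := eqVneq x v; have [yv|yv] := eqVneq y v.
- by rewrite xv yv eqxx in xy.
- by have := move_to_front_first r_tot yv; rewrite xv in mxy; rewrite mxy ltnn.
- by have := move_to_front_first r_tot xv; rewrite yv in mxy; rewrite mxy ltnn.
have := total_order_neq r_tot xy; rewrite neq_ltn.
by rewrite -(move_to_front_lt r_tot xv yv) -(move_to_front_lt r_tot yv xv) mxy ltnn.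
Qed.

Lemma nphases_move_to_front r v : total_order r ->
  nphases e (move_to_front r v) <= (nphases e r).+1.
Proof.
move=> r_tot; have /existsP[f /respecting_phase_seqP[_ [cfree resp]]] :=
  has_phase_seq_nphases r_tot.
pose f' x := if x == v then ord0 else lift ord0 (f x).
apply: (@nphases_le _ _ f'); split=> x y; rewrite /f'.
  have [-> | xv] := eqVneq x v; have [-> | yv] := eqVneq y v.
  - by [].
  - by move=> _ /(congr1 (@nat_of_ord _)); rewrite lift0.
  - by move=> _ /(congr1 (@nat_of_ord _)); rewrite lift0.
  - by move=> xy /lift_inj; apply: cfree.
have [-> | xv] := eqVneq x v; have [-> | yv] := eqVneq y v.
- by rewrite ltnn.
- by rewrite lift0.
- by move=> _; rewrite ltnNge ltnW // move_to_front_first.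
- by rewrite !lift0 ltnS move_to_front_lt //; apply: resp.
Qed.

(* front_order r0 [:: v_1; ...; v_k] ranks v_1, ..., v_k first, in this
   order, followed by the other transactions in the order r0. *)
Fixpoint front_order r0 (l : seq T) : {ffun T -> 'I_n} :=
  if l is v :: l' then move_to_front (front_order r0 l') v else r0.

Lemma total_order_front_order r0 l : total_order r0 -> total_order (front_order r0 l).
Proof. by move=> r0_tot; elim: l => //= v l IH; apply: total_order_move_to_front. Qed.

Lemma sorted_front_order r0 l : total_order r0 -> uniq l ->
  sorted (fun x y => front_order r0 l x < front_order r0 l y) l.
Proof.
move=> r0_tot; elim: l => // v l IH /andP[vl l_uniq] /=.
have l_tot := total_order_front_order l r0_tot.
case: l IH vl l_uniq l_tot => // w l IH vl l_uniq l_tot /=; apply/andP; split.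
  by apply: (move_to_front_first l_tot); apply: contraNneq _ vl => ->; apply: mem_head.
apply: (@sub_in_path _ (predC1 v)); last exact: IH.
  by move=> x y xv yv; rewrite (move_to_front_lt l_tot xv yv).
by apply/allP => x xl; apply: contraNneq _ vl => <-.
Qed.

End NumberOfPhases.

Section ConcurrencyLevels.
Variables (T : finType) (e : rel T).
Local Notation n := #|T|.
Implicit Types r : {ffun T -> 'I_n}.

Lemma nphases_front_order_ivt r0 l L : total_order r0 ->
  nphases e r0 <= L <= nphases e (front_order r0 l) ->
  exists2 r, total_order r & nphases e r = L.
Proof.
move=> r0_tot; elim: l => [|v l IH] /= L_range.
  by exists r0 => //; apply/eqP; rewrite eqn_leq.
have l_tot := total_order_front_order l r0_tot.
case/andP: L_range => r0L Lvl.
have [Ll | lL] := leqP L (nphases e (front_order r0 l)); first by apply: IH; rewrite r0L.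
exists (move_to_front (front_order r0 l) v); first exact: total_order_move_to_front.
by apply/eqP; rewrite eqn_leq Lvl (leq_trans (nphases_move_to_front e v l_tot)).
Qed.

Lemma exists_total_order_nphases_le_Mmin :
  exists2 r0, total_order r0 & nphases e r0 <= Mmin e.
Proof.
rewrite /Mmin; apply: (big_ind (fun m => exists2 r0, total_order r0 & nphases e r0 <= m)).
- pose r := [ffun x => enum_rank x] : {ffun T -> 'I_n}.
  have r_tot : total_order r by apply/injectiveP => x y; rewrite !ffunE => /enum_rank_inj.
  by exists r => //; apply: nphases_le (total_order_phase_assignment e r_tot).
- move=> a b [ra ra_tot ha] [rb rb_tot hb].
  case: (leqP a b) => ab; first by exists ra; rewrite ?(minn_idPl ab).
  by exists rb; rewrite ?(minn_idPr (ltnW ab)).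
- by move=> r r_tot; exists r.
Qed.

Lemma has_chain_ch : has_chain e (ch e).
Proof.
rewrite /ch; apply: (big_ind (has_chain e)) => //.
- by apply/existsP; exists [tuple].
- by move=> a b ha hb; case: (leqP a b).
Qed.

Lemma nphases_attains L : Mmin e <= L <= ch e ->
  exists2 r, total_order r & nphases e r = L.
Proof.
case/andP=> ML Lc; have [r0 r0_tot r0M] := exists_total_order_nphases_le_Mmin.
have /existsP[t /andP[t_uniq t_chain]] := has_chain_ch.
apply: (@nphases_front_order_ivt r0 t) => //; rewrite (leq_trans r0M ML) /=.
have t_tot := total_order_front_order t r0_tot.
have := chain_size_le_nphases t_tot t_chain (sorted_front_order r0_tot t_uniq).
by rewrite size_tuple; apply: leq_trans.
Qed.

Lemma size_concurrency_levels : 0 < n ->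
  (ch e).+1 - Mmin e <= size (concurrency_levels e).
Proof.
move=> n_gt0; set M := Mmin e; set c := ch e.
pose levels := [seq (n%:Q / L%:Q)%R | L : nat <- iota M (c.+1 - M)].
have -> : c.+1 - M = size levels by rewrite size_map size_iota.
apply: uniq_leq_size.
  rewrite map_inj_in_uniq ?iota_uniq // => a b _ _ /=.
  have nq : (n%:Q != 0)%R by rewrite pnatr_eq0 -lt0n.
  by move/(mulfI nq)/invr_inj/eqP; rewrite eqr_nat => /eqP.
move=> q /mapP[L]; rewrite mem_iota => /andP[ML Lc] ->.
have [r r_tot <-] : exists2 r, total_order r & nphases e r = L.
  by apply: nphases_attains; rewrite ML /=; lia.
by rewrite mem_undup; apply/mapP; exists r; rewrite ?mem_enum.
Qed.

End ConcurrencyLevels.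

Lemma ceil_ratio_le (R : archiRealFieldType) (c M : nat) :
  (Num.ceil ((c%:R - (M%:R - 1)) / (M%:R - 1) : R) <= (c.+1 - M)%:Z)%R.
Proof.
rewrite ceil_le_int -pmulrn.
case: M => [|[|d]].
- rewrite subn0 sub0r invrN1 mulrN1 -natr1; have := ler0n R c; lra.
- (* for M = 1 the ratio is x / 0 = 0 *)
  by rewrite (subrr (1 : R)%R) invr0 mulr0 ler0n.
have d_pos : (0 < d.+2%:R - 1 :> R)%R by rewrite -natr1 addrK ltr0n.
rewrite ler_pdivrMr // -!natr1.
have := ler0n R c; have := ler0n R d.
case: (leqP d.+2 c.+1) => [le_dc | lt_cd].
  by have := le_dc; rewrite -(ler_nat R) natrB // -!natr1; nra.
have : (c%:R <= d%:R + 1 :> R)%R by rewrite natr1 ler_nat ltnW.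
by rewrite (eqP (ltnW lt_cd)); lra.
Qed.

Theorem theorem6 (T : finType) (e : rel T)
  (e_sym : symmetric e) (e_irr : irreflexive e) (e_ne : exists x y, e x y) :
  (alpha e <= (size (concurrency_levels e))%:Z)%R.
Proof.
have [x0 _] := e_ne.
apply: le_trans (ceil_ratio_le _ _ _) _.
by rewrite lez_nat size_concurrency_levels //; apply/card_gt0P; exists x0.
Qed.
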